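(* Let $b_n$ be the number of vertices of $\mathscr{BG}_+(n)$. Then $b_n=f_n+1$, where $f_1=0$ and for $n>1$ \[ f_n=\sum_{k=1}^{n-1}\binom{n}{k}\left(2^{2^k-1}-f_k-1\right). \]
   Context: For $N=\{1,\ldots,n\}$, a game is a map $v:2^N\to\mathbb{R}$ with $v(\varnothing)=0$. $\mathscr{BG}_+(n)$ is the polytope (in $\mathbb{R}^{2^N\setminus\{\varnothing,N\}}$) of games $v$ with $v(S)\geqslant 0$ for all $S$, $v(N)=1$, and nonempty core $C(v)=\{x\in\mathbb{R}^N:\sum_{i\in S}x_i\geqslant v(S)\ \forall S,\ \sum_{i\in N}x_i=v(N)\}$. *)

From HB Require Import structures.
From mathcomp Require Import all_boot all_order all_algebra.
From mathcomp Require Import reals.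
Set Implicit Arguments. Unset Strict Implicit. Unset Printing Implicit Defensive.
Import Order.TTheory GRing.Theory Num.Theory.
Local Open Scope ring_scope.

(* Players N = {1,...,n} are represented by 'I_n; coalitions by {set 'I_n}.
   A game is a function v : {set 'I_n} -> R with v set0 = 0. *)
Definition game (R : realType) (n : nat) := {ffun {set 'I_n} -> R}.

Definition in_core (R : realType) (n : nat) (v : game R n) (x : 'I_n -> R) : Prop :=
  (forall S : {set 'I_n}, v S <= \sum_(i in S) x i) /\
  \sum_(i in [set: 'I_n]) x i = v [set: 'I_n].

Definition core_nonempty (R : realType) (n : nat) (v : game R n) : Prop :=
  exists x : 'I_n -> R, in_core v x.

(* BG_+(n): games with v(empty)=0, v(S) >= 0, v(N) = 1, nonempty core.
   (The coordinates at set0 and setT are fixed, so this is an affine copy of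
   the polytope in R^(2^N \ {empty, N}).) *)
Definition BGplus (R : realType) (n : nat) (v : game R n) : Prop :=
  v set0 = 0 /\ v [set: 'I_n] = 1 /\
  (forall S : {set 'I_n}, 0 <= v S) /\ core_nonempty v.

Definition is_vertex (R : realType) (n : nat) (v : game R n) : Prop :=
  BGplus v /\
  forall (u w : game R n) (t : R), BGplus u -> BGplus w -> 0 < t < 1 ->
    (forall S, v S = t * u S + (1 - t) * w S) -> u = w.

From HB Require Import structures.
From mathcomp Require Import all_boot all_order all_algebra.
From mathcomp Require Import reals.
From mathcomp Require Import ring lra.
Import Order.TTheory GRing.Theory Num.Theory.
Set Implicit Arguments. Unset Strict Implicit. Unset Printing Implicit Defensive.

(* A game v lies in BG_+(n) iff v(S) = r(S) x(S) for a point x of the simplex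
   (a core point) and weights 0 <= r(S) <= 1 with r(N) = 1: take r = v / x.
   At a vertex this representation can be split neither along a decomposition
   x = t e_i + (1 - t) y, where x_i > 0, nor by moving a weight r(S) that lies
   strictly between 0 and 1.  Hence a vertex is a 0/1 game all of whose
   winning proper coalitions contain the player i, and conversely every such
   game is a vertex.  So b_n is the number of families of proper coalitions
   with a common point ("centered" families).

   Sort the nonempty centered families by their intersection K.  Those with
   intersection exactly K are the subfamilies of {B | K ⊆ B ⊊ N}, of which
   there are 2^(2^|N \ K| - 1), except the ones with intersection strictly
   larger than K (or empty); via B |-> B \ K the exceptions are the centered
   families on N \ K.  Adding one for the empty family,
   b_n = 1 + sum_K (2^(2^|N \ K| - 1) - b_|N \ K|), the recurrence for
   f_n = b_n - 1. *)

Lemma card_in_bij (aT rT : finType) (A : {set aT}) (B : {set rT})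
    (f : aT -> rT) (g : rT -> aT) :
  {in A, forall x, f x \in B} -> {in B, forall y, g y \in A} ->
  {in A, cancel f g} -> {in B, cancel g f} -> #|A| = #|B|.
Proof.
move=> fAB gBA fK gK; apply/anti_leq/andP; split.
- rewrite -(card_in_imset (can_in_inj fK)); apply/subset_leq_card/subsetP.
  by move=> _ /imsetP[x xA ->]; exact: fAB.
- rewrite -(card_in_imset (can_in_inj gK)); apply/subset_leq_card/subsetP.
  by move=> _ /imsetP[y yB ->]; exact: gBA.
Qed.

Lemma imset_can_in (aT rT : finType) (A G : {set aT}) (f : aT -> rT)
    (g : rT -> aT) :
  {in A, cancel f g} -> G \subset A -> g @: (f @: G) = G.
Proof.
move=> fK /subsetP sGA; rewrite -imset_comp -[RHS]imset_id.
by apply: eq_in_imset => x /sGA /fK.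
Qed.

Section CenteredFamilies.
Variable T : finType.
Implicit Types (B C K M : {set T}) (G H : {set {set T}}).

Lemma setDUK K B : K \subset B -> B :\: K :|: K = B.
Proof.
move=> /subsetP sKB; apply/setP => x; rewrite !inE.
by case: (boolP (x \in K)) => [/sKB ->|]; rewrite ?orbT ?orbF.
Qed.

Lemma setUDK C K : [disjoint C & K] -> (C :|: K) :\: K = C.
Proof. by rewrite setDUl setDv setU0 => /setDidPl. Qed.

Lemma proper_setD K B M : K \subset B -> B \proper M -> B :\: K \proper M :\: K.
Proof.
move=> sKB BM; have sKM := subset_trans sKB (proper_sub BM).
rewrite properEneq setSD ?proper_sub // andbT.
move: BM; apply: contraTneq => BKE.
by rewrite -(setDUK sKB) BKE setDUK // properE subxx andbF.
Qed.

Lemma proper_setU C K M : K \subset M -> C \proper M :\: K -> C :|: K \proper M.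
Proof.
move=> sKM CMK; have /andP[CM dCK] := properD CMK.
rewrite properEneq subUset (proper_sub CM) sKM !andbT.
move: CMK; apply: contraTneq => CKE.
by rewrite -CKE setUDK // properE subxx andbF.
Qed.

Definition centered M : {set {set {set T}}} :=
  [set G : {set {set T}} | (G \subset [set B : {set T} | B \proper M]) &&
           ((G == set0) || (\bigcap_(B in G) B != set0))].

Definition supsets K M : {set {set T}} :=
  [set B : {set T} | K \subset B & B \proper M].

Definition capped K M : {set {set {set T}}} :=
  [set G : {set {set T}} |
    [&& G \subset supsets K M, G != set0 & \bigcap_(B in G) B == K]].

Lemma centered_common (i0 : T) M G :
  G \in centered M -> exists i, forall B, B \in G -> i \in B.
Proof.
rewrite inE => /andP[_ /orP[/eqP -> | /set0Pn[i /bigcapP]]]; last by exists i.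
by exists i0 => B; rewrite inE.
Qed.

Lemma card_proper_subsets M : #|[set B : {set T} | B \proper M]| = (2 ^ #|M|).-1.
Proof.
rewrite -card_powerset (cardsD1 M (powerset M)) powersetE subxx add1n /=.
by apply: eq_card => B; rewrite !inE properEneq.
Qed.

Lemma setDK_supsets K M :
  {in supsets K M, cancel (fun B => B :\: K) (fun C => C :|: K)}.
Proof. by move=> B; rewrite inE => /andP[sKB _] /=; apply: setDUK. Qed.

Lemma setUK_proper K M :
  {in [set C : {set T} | C \proper M :\: K],
    cancel (fun C => C :|: K) (fun B => B :\: K)}.
Proof. by move=> C; rewrite inE => /properD /andP[_ dCK] /=; apply: setUDK. Qed.

Lemma card_supsets K M : K \subset M -> #|supsets K M| = (2 ^ #|M :\: K|).-1.
Proof.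
move=> sKM; rewrite -card_proper_subsets.
apply: card_in_bij (setDK_supsets (M := M)) (setUK_proper (M := M)).
- by move=> B; rewrite !inE => /andP[sKB BM]; apply: proper_setD.
- by move=> C; rewrite !inE subsetUr /=; apply: proper_setU.
Qed.

Lemma imset_setD_centered K M G : G \in powerset (supsets K M) :\: capped K M ->
  [set B :\: K | B in G] \in centered (M :\: K).
Proof.
rewrite !inE => /andP[not_capped sG]; rewrite sG /= in not_capped.
move/subsetP: sG => sG; apply/andP; split.
  apply/subsetP => _ /imsetP[B BG ->]; have := sG B BG.
  by rewrite !inE => /andP[sKB BM]; apply: proper_setD.
have [->|Gn0] := eqVneq G set0; first by rewrite imset0 eqxx.
move: not_capped; rewrite Gn0 /= => capG_neqK.
have sK_capG : K \subset \bigcap_(B in G) B.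
  by apply/bigcapsP => B /sG; rewrite inE => /andP[].
have /properP[_ [i /bigcapP i_capG iK]] : K \proper \bigcap_(B in G) B.
  by rewrite properEneq eq_sym capG_neqK.
apply/orP; right; apply/set0Pn; exists i.
by apply/bigcapP => _ /imsetP[B BG ->]; rewrite inE iK i_capG.
Qed.

Lemma imset_setU_notin_capped K M H : K \subset M -> H \in centered (M :\: K) ->
  [set C :|: K | C in H] \in powerset (supsets K M) :\: capped K M.
Proof.
move=> sKM; rewrite inE => /andP[/subsetP sH cH].
have sub : [set C :|: K | C in H] \subset supsets K M.
  apply/subsetP => _ /imsetP[C CH ->]; rewrite inE subsetUr /=.
  by apply: proper_setU => //; have := sH C CH; rewrite inE.
rewrite !inE sub andbT /= negb_and.
have [->|Hn0] := eqVneq H set0; first by rewrite imset0 eqxx.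
move: cH; rewrite (negbTE Hn0) /= => /set0Pn[i /bigcapP i_capH].
have [C0 C0H] := set0Pn _ Hn0.
have iK : i \notin K.
  have := sH C0 C0H; rewrite inE => /properD /andP[_ /disjointFr->] //.
  exact: i_capH.
apply/orP; right; apply: contraNneq iK => <-.
by apply/bigcapP => _ /imsetP[C CH ->]; rewrite inE i_capH.
Qed.

Lemma card_capped_add_centered K M : K \subset M ->
  #|capped K M| + #|centered (M :\: K)| = 2 ^ #|supsets K M|.
Proof.
move=> sKM; rewrite -card_powerset -(cardsID (capped K M) (powerset (supsets K M))).
have -> : powerset (supsets K M) :&: capped K M = capped K M.
  by apply/setIidPr/subsetP => G; rewrite !inE => /and3P[].
congr (_ + _); apply: (card_in_bij (f := fun H => [set C :|: K | C in H])
                                   (g := fun G => [set B :\: K | B in G])).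
- by move=> H; apply: imset_setU_notin_capped.
- exact: imset_setD_centered.
- move=> H; rewrite inE => /andP[sH _].
  exact: imset_can_in (@setUK_proper K M) sH.
- move=> G; rewrite !inE => /andP[_ sG].
  exact: imset_can_in (@setDK_supsets K M) sG.
Qed.

Lemma mem_capped K M G : K != set0 ->
  (G \in capped K M) = [&& G \in centered M, G != set0 & \bigcap_(B in G) B == K].
Proof.
move=> Kn0; rewrite !inE.
have [->|Gn0] := eqVneq G set0; first by rewrite !andbF.
have [capGK|] := eqVneq (\bigcap_(B in G) B) K; last by rewrite !andbF.
rewrite capGK Kn0 !andbT /=; apply/subsetP/subsetP => sG B BG; have := sG B BG.
  by rewrite !inE => /andP[].
by rewrite !inE => ->; rewrite -capGK bigcap_inf.
Qed.

Lemma card_centered_rec M :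
  #|centered M| = 1 + \sum_(K | (K != set0) && (K \proper M)) #|capped K M|.
Proof.
rewrite -sum1_card (bigD1 set0) /=; last by rewrite inE sub0set eqxx.
congr (_ + _).
rewrite (partition_big (fun G => \bigcap_(B in G) B)
                       (fun K => (K != set0) && (K \proper M))) /=.
  apply: eq_bigr => K /andP[Kn0 _]; rewrite -sum1_card.
  by apply: eq_bigl => G; rewrite mem_capped // andbA.
move=> G /andP[]; rewrite inE => /andP[/subsetP sG cG] Gn0.
move: cG; rewrite (negbTE Gn0) /= => -> /=.
have [B BG] := set0Pn _ Gn0.
by apply: sub_proper_trans (bigcap_inf _ BG) _; have := sG B BG; rewrite inE.
Qed.

Local Open Scope ring_scope.

Lemma sum_subsets_by_card (V : nmodType) M (a b : nat) (h : nat -> V) :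
  \sum_(K : {set T} | (K \subset M) && (a <= #|K| < b)%N) h #|K|
  = \sum_(a <= k < b) h k *+ 'C(#|M|, k).
Proof.
symmetry; rewrite big_nat_cond.
under eq_bigr => k _ do rewrite -cards_draws -sumr_const.
rewrite (exchange_big_dep (fun K => (K \subset M) && (a <= #|K| < b)%N)) /=;
  last by move=> k K; rewrite andbT inE => rng /andP[-> /eqP->].
symmetry; apply: eq_bigr => K /andP[sKM rng].
rewrite (eq_bigl (pred1 #|K|)) => [|k]; last first.
  rewrite andbT inE sKM /= eq_sym.
  by case: (eqVneq k #|K|) => [->|_]; rewrite ?andbF ?andbT.
by rewrite -big_filter filter_pred1_uniq ?iota_uniq ?mem_index_iota // big_seq1.
Qed.

Lemma sum_nonempty_proper_by_card (V : nmodType) M (h : nat -> V) :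
  \sum_(K : {set T} | (K != set0) && (K \proper M)) h #|M :\: K|
  = \sum_(1 <= k < #|M|) h k *+ 'C(#|M|, k).
Proof.
rewrite (eq_bigl (fun K => (K \subset M) && (1 <= #|K| < #|M|)%N)) => [|K];
  last first.
  by rewrite -card_gt0 properEcard andbCA.
rewrite (eq_bigr (fun K => h (#|M| - #|K|)%N)) => [|K /andP[sKM _]]; last first.
  by rewrite cardsD (setIidPr sKM).
rewrite (sum_subsets_by_card M 1 #|M| (fun k => h (#|M| - k)%N)) big_nat_rev /=.
apply: eq_big_nat => k /andP[_ k_lt].
by rewrite add1n subSS subKn ?bin_sub // ltnW.
Qed.

End CenteredFamilies.

Local Open Scope ring_scope.

Section CenteredCount.
Variables (T : finType) (f : nat -> int).
Hypothesis f1 : f 1%N = 0.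
Hypothesis frec : forall m : nat, (1 < m)%N ->
  f m = \sum_(1 <= k < m) 'C(m, k)%:Z * (2%:Z ^+ (2 ^ k - 1) - f k - 1).

Lemma card_centered (M : {set T}) : (0 < #|M|)%N -> #|centered M|%:Z = f #|M| + 1.
Proof.
have [m] := ubnP #|M|; elim: m M => // m IH M /ltnSE M_le M_gt0.
have card_capped K : K != set0 -> K \proper M ->
    #|capped K M|%:Z = 2%:Z ^+ (2 ^ #|M :\: K| - 1) - f #|M :\: K| - 1.
  move=> Kn0 KM; have sKM := proper_sub KM.
  have cardMK : #|M :\: K| = (#|M| - #|K|)%N by rewrite cardsD (setIidPr sKM).
  have := card_capped_add_centered sKM; rewrite card_supsets // => /(congr1 Posz).
  rewrite PoszD IH; last 2 first.
  - by apply: leq_trans M_le; rewrite cardMK ltn_subrL card_gt0 Kn0 M_gt0.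
  - by rewrite cardMK subn_gt0 proper_card.
  have pow2 k : (2 ^ k)%:Z = 2%:Z ^+ k by rewrite -!natz natrX.
  by rewrite pow2 subn1 => <-; ring.
rewrite card_centered_rec PoszD addrC; congr (_ + _).
rewrite -natz natr_sum.
under eq_bigr => K /andP[Kn0 KM] do rewrite natz card_capped //.
rewrite (sum_nonempty_proper_by_card M (fun k => 2%:Z ^+ (2 ^ k - 1) - f k - 1)) /=.
have [M_gt1|] := ltnP 1 #|M|.
  by rewrite frec //; apply: eq_bigr => k _; rewrite -mulr_natl natz.
move=> M_le1; have -> : #|M| = 1%N by apply/anti_leq/andP.
by rewrite big_geq // f1.
Qed.

End CenteredCount.

Section Vertices.
Variables (R : realType) (n : nat).
Implicit Types (v u w : game R n) (x y : 'I_n -> R) (r : {set 'I_n} -> R)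
  (S A : {set 'I_n}) (F : {set {set 'I_n}}).

Definition in_simplex x :=
  (forall j, 0 <= x j) /\ \sum_(j in [set: 'I_n]) x j = 1.

Definition weights01 r := (forall S, 0 <= r S <= 1) /\ r setT = 1.

Definition scaled_game r x : game R n := [ffun S => r S * \sum_(j in S) x j].

Definition unit_vector (i : 'I_n) : 'I_n -> R := fun j => (j == i)%:R.

Definition winning_game F : game R n := [ffun S => ((S \in F) || (S == setT))%:R].

Lemma sum_unit_vector i S : \sum_(j in S) unit_vector i j = (i \in S)%:R.
Proof.
have [iS|iNS] := boolP (i \in S).
  by rewrite (bigD1 i) //= /unit_vector eqxx big1 ?addr0 // => j /andP[_ /negbTE->].
by rewrite big1 // => j jS; rewrite /unit_vector; case: eqP jS iNS => // -> ->.
Qed.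

Lemma in_simplex_unit i : in_simplex (unit_vector i).
Proof. by split=> [j|]; rewrite ?sum_unit_vector ?in_setT // ler0n. Qed.

Lemma in_simplex_sum_le1 x S : in_simplex x -> 0 <= \sum_(j in S) x j <= 1.
Proof.
case=> x_ge0 <-; rewrite sumr_ge0 //= big_mkcond [leRHS]big_mkcond /=.
by apply: ler_sum => j _; rewrite in_setT; case: ifP.
Qed.

Lemma scaled_game_mixl r x y t S :
  scaled_game r (fun j => t * x j + (1 - t) * y j) S
  = t * scaled_game r x S + (1 - t) * scaled_game r y S.
Proof. by rewrite !ffunE big_split /= -!mulr_sumr; ring. Qed.

Lemma scaled_game_mixr r1 r2 x t S :
  scaled_game (fun A => t * r1 A + (1 - t) * r2 A) x S
  = t * scaled_game r1 x S + (1 - t) * scaled_game r2 x S.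
Proof. by rewrite !ffunE; ring. Qed.

Lemma BGplus_scaled r x : weights01 r -> in_simplex x -> BGplus (scaled_game r x).
Proof.
move=> [r01 rT] [x_ge0 x1]; split; [|split; [|split]].
- by rewrite ffunE big_set0 mulr0.
- by rewrite ffunE rT x1 mulr1.
- by move=> S; rewrite ffunE mulr_ge0 ?sumr_ge0 //; case/andP: (r01 S).
- exists x; split; last by rewrite ffunE rT x1 mul1r.
  by move=> S; rewrite ffunE ler_piMl ?sumr_ge0 //; case/andP: (r01 S).
Qed.

Lemma BGplus_scaled_rep v :
  BGplus v -> exists r x, [/\ weights01 r, in_simplex x & v = scaled_game r x].
Proof.
case=> _ [vT [v_ge0 [x [x_ge_v xT]]]].
have x_ge0 j : 0 <= x j.
  by apply: le_trans (v_ge0 [set j]) _; have := x_ge_v [set j]; rewrite big_set1.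
have xS_ge0 S : 0 <= \sum_(j in S) x j by apply: sumr_ge0.
(* If x(S) = 0 then v S = 0, and so is the junk value v S / 0. *)
exists (fun S => v S / \sum_(j in S) x j), x; split.
- split=> [S|]; last by rewrite xT vT divr1.
  rewrite divr_ge0 //=; have [->|xS_neq0] := eqVneq (\sum_(j in S) x j) 0.
    by rewrite invr0 mulr0.
  by rewrite ler_pdivrMr ?mul1r // lt_def xS_neq0 xS_ge0.
- by split; rewrite // xT.
- apply/ffunP => S; rewrite ffunE.
  have [xS0|xS_neq0] := eqVneq (\sum_(j in S) x j) 0; last by rewrite divfK.
  by rewrite xS0 mulr0; apply/le_anti; rewrite v_ge0 -xS0 x_ge_v.
Qed.

Lemma BGplus_le1 v S : BGplus v -> v S <= 1.
Proof.
case/BGplus_scaled_rep => r [x [[r01 _] xs ->]]; rewrite ffunE.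
have /andP[rS_ge0 rS_le1] := r01 S.
have /andP[xS_ge0 xS_le1] := in_simplex_sum_le1 S xs.
exact: mulr_ile1.
Qed.

Lemma vertex_mix_eq v u w t : is_vertex v -> BGplus u -> BGplus w -> 0 < t < 1 ->
  (forall S, v S = t * u S + (1 - t) * w S) -> v = u.
Proof.
case=> _ ext Bu Bw t01 vE; have uw := ext u w t Bu Bw t01 vE.
by apply/ffunP => S; rewrite vE -uw; ring.
Qed.

Lemma vertex_scaled_unit v : is_vertex v ->
  exists i r, weights01 r /\ v = scaled_game r (unit_vector i).
Proof.
move=> vv; have [r [x [rw [x_ge0 x1] vE]]] := BGplus_scaled_rep vv.1.
have [i xi_gt0] : exists i, 0 < x i.
  apply/existsP; apply: contraT => /existsPn x_le0.
  have : \sum_(j in [set: 'I_n]) x j <= 0.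
    by apply: sumr_le0 => j _; rewrite leNgt x_le0.
  by rewrite x1 ler10.
have xi_le1 : x i <= 1.
  by have /andP[_] := in_simplex_sum_le1 [set i] (conj x_ge0 x1); rewrite big_set1.
pose t := x i / 2; pose y j := (x j - t * unit_vector i j) / (1 - t).
have t_gt0 : 0 < t by rewrite divr_gt0.
have t_lt1 : t < 1 by rewrite /t; lra.
have omt_neq0 : 1 - t != 0 by rewrite subr_eq0 gt_eqF.
have ys : in_simplex y.
  split=> [j|].
    rewrite divr_ge0 ?subr_ge0 ?(ltW t_lt1) // /unit_vector.
    by case: eqP => [->|_]; rewrite ?mulr1 ?mulr0 ?x_ge0 // /t; lra.
  by rewrite -mulr_suml sumrB -mulr_sumr sum_unit_vector in_setT x1 mulr1 divff.
have xE j : x j = t * unit_vector i j + (1 - t) * y j.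
  by rewrite /y [(1 - t) * _]mulrC divfK //; ring.
exists i, r; split=> //.
apply: (vertex_mix_eq (w := scaled_game r y) (t := t)) => //.
- exact: BGplus_scaled rw (in_simplex_unit i).
- exact: BGplus_scaled rw ys.
- by rewrite t_gt0 t_lt1.
- move=> S; rewrite -scaled_game_mixl vE !ffunE; congr (_ * _).
  by apply: eq_bigr => j _; apply: xE.
Qed.

Lemma vertex_scaled_tight v r x : is_vertex v -> weights01 r -> in_simplex x ->
  v = scaled_game r x -> forall S, v S = 0 \/ v S = \sum_(j in S) x j.
Proof.
move=> vv [r01 rT] xs vE S.
have [->|S_neqT] := eqVneq S setT; first by right; rewrite vE ffunE rT mul1r.
have vS : v S = r S * \sum_(j in S) x j by rewrite vE ffunE.
have [xS0|xS_neq0] := eqVneq (\sum_(j in S) x j) 0.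
  by left; rewrite vS xS0 mulr0.
have /andP[rS_ge0 rS_le1] := r01 S.
have [rS0|rS_gt0] := eqVneq (r S) 0; first by left; rewrite vS rS0 mul0r.
have [rS1|rS_lt1] := eqVneq (r S) 1; first by right; rewrite vS rS1 mul1r.
pose d := Num.min (r S) (1 - r S).
have d_gt0 : 0 < d.
  by rewrite lt_min lt_def rS_gt0 rS_ge0 subr_gt0 lt_def eq_sym rS_lt1.
pose rd e A := r A + e * (A == S)%:R.
have [d_le_r d_le_1r] : d <= r S /\ d <= 1 - r S.
  by split; rewrite /d ge_min lexx ?orbT.
have rdw e : `|e| <= d -> weights01 (rd e).
  rewrite ler_norml => /andP[e_ge e_le]; split=> [A|]; last first.
    by rewrite /rd eq_sym (negbTE S_neqT) mulr0 addr0.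
  rewrite /rd; case: eqP => [->|_]; last by rewrite mulr0 addr0 r01.
  by rewrite mulr1; apply/andP; split; lra.
have : v = scaled_game (rd d) x.
  apply: (vertex_mix_eq (w := scaled_game (rd (- d)) x) (t := 1 / 2)) => //.
  - by apply: BGplus_scaled => //; apply: rdw; rewrite ger0_norm ?(ltW d_gt0).
  - by apply: BGplus_scaled => //; apply: rdw; rewrite normrN ger0_norm ?(ltW d_gt0).
  - by apply/andP; split; lra.
  - move=> A; rewrite -scaled_game_mixr vE !ffunE /rd; congr (_ * _).
    by field.
move/ffunP/(_ S); rewrite vS ffunE /rd eqxx mulr1 mulrDl => vSE.
have /eqP : d * \sum_(j in S) x j = 0 by nra.
by rewrite mulf_eq0 (negbTE xS_neq0) orbF gt_eqF.
Qed.

Lemma vertex_winning_game v : is_vertex v ->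
  exists2 F, F \in centered setT & v = winning_game F.
Proof.
move=> vv; have [i [r [rw vE]]] := vertex_scaled_unit vv.
have v01 S : v S != 0 -> v S = 1 /\ i \in S.
  case: (vertex_scaled_tight vv rw (in_simplex_unit i) vE S) => ->;
    rewrite ?eqxx // sum_unit_vector.
  by case: (i \in S); rewrite ?eqxx.
exists [set S : {set 'I_n} | (S \proper setT) && (v S != 0)].
  rewrite inE; apply/andP; split.
    by apply/subsetP => S; rewrite !inE => /andP[].
  apply/orP; right; apply/set0Pn; exists i.
  by apply/bigcapP => S; rewrite inE => /andP[_ /v01[]].
apply/ffunP => S; rewrite ffunE inE properT.
have [->|_] := eqVneq S setT; first by rewrite orbT vv.1.2.1.
by rewrite orbF /=; have [->|/v01[->]] := eqVneq (v S) 0.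
Qed.

Lemma winning_game_vertex F : (0 < n)%N -> F \in centered setT ->
  is_vertex (winning_game F).
Proof.
move=> n_gt0 cF; have [i iF] := centered_common (Ordinal n_gt0) cF.
have wE : winning_game F
    = scaled_game (fun S => ((S \in F) || (S == setT))%:R) (unit_vector i).
  apply/ffunP => S; rewrite !ffunE sum_unit_vector.
  have [/iF->|_] := boolP (S \in F); first by rewrite mulr1.
  by have [->|_] := eqVneq S setT; rewrite ?in_setT ?mulr1 ?mul0r.
split.
  rewrite wE; apply: BGplus_scaled (in_simplex_unit i).
  by split=> [S|]; rewrite ?eqxx ?orbT // ler0n lern1 leq_b1.
move=> u w t Bu Bw /andP[t_gt0 t_lt1] E; apply/ffunP => S.
have := E S; have := BGplus_le1 S Bu; have := BGplus_le1 S Bw.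
have := Bu.2.2.1 S; have := Bw.2.2.1 S.
(* 0 and 1 are not proper convex combinations of two distinct points of [0, 1]. *)
rewrite ffunE; case: (_ || _) => /=; nra.
Qed.

Lemma winning_game_inj : {in centered setT &, injective winning_game}.
Proof.
have setT_notin F : F \in centered setT -> setT \notin F.
  rewrite inE => /andP[/subsetP sF _].
  by apply/negP => /sF; rewrite inE properT eqxx.
move=> F1 F2 cF1 cF2 E; apply/setP => S.
have := congr1 (fun g : game R n => g S) E; rewrite !ffunE.
have [->|_] := eqVneq S setT; first by rewrite !(negbTE (setT_notin _ _)).
by rewrite !orbF => /eqP; rewrite eqr_nat; do 2 case: (S \in _).
Qed.

End Vertices.

Theorem theorem10 (R : realType) (f : nat -> int)
  (f1 : f 1%N = 0)
  (frec : forall n : nat, (1 < n)%N ->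
     f n = \sum_(1 <= k < n) ('C(n, k))%:Z * (2%:Z ^+ (2 ^ k - 1) - f k - 1))
  (n : nat) (hn : (1 <= n)%N) :
  exists s : seq (game R n),
    [/\ uniq s, (forall v : game R n, v \in s <-> is_vertex v)
      & (size s)%:Z = f n + 1].
Proof.
exists [seq winning_game R F | F <- enum (centered [set: 'I_n])]; split.
- rewrite map_inj_in_uniq ?enum_uniq // => F1 F2.
  by rewrite !mem_enum; apply: winning_game_inj.
- move=> v; split.
    by case/mapP => F; rewrite mem_enum => cF ->; apply: winning_game_vertex.
  by case/vertex_winning_game => F cF ->; apply/mapP; exists F; rewrite ?mem_enum.
- by rewrite size_map -cardE (card_centered f1 frec) cardsT card_ord.
Qed.
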